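(* Let $n\ge1$, $p$ a prime and $R\subsetneq E_n$. The $n$ vectors $\lambda^{(i)}_k$ ($1\le i\le h$, $1\le k\le g_i$) form a basis of $\mathbb{Q}^n$.
   Context: $E_n=\{1,\dots,n\}$, indices modulo $n$; $e_m$ ($m\in\mathbb{Z}$) the standard basis vectors of $\mathbb{Z}^n$ extended $n$-periodically. Write $E_n\setminus R=\{r_1,\dots,r_h\}$ ($h\ge1$) so that $r_{i+1}$ is the first element of $E_n\setminus R$ in the cyclic sequence $r_i+1,r_i+2,\dots$ (with $r_{h+1}=r_1$, $r_0=r_h$); let $g_i$ be the smallest positive integer with $r_{i-1}+g_i\equiv r_i\pmod n$. Define $\lambda^{(i)}_k=e_{r_i}+p^ke_{r_i-k}$ for $1\le k\le g_i-1$ and $\lambda^{(i)}_{g_i}=e_{r_i}-p^{g_i}e_{r_{i-1}}$. *)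

From HB Require Import structures.
From mathcomp Require Import all_boot all_order all_algebra.
Set Implicit Arguments. Unset Strict Implicit. Unset Printing Implicit Defensive.
Import Order.TTheory GRing.Theory Num.Theory.
Local Open Scope ring_scope.

(* Convention: E_n = {1,...,n} is represented by 'I_n = {0,...,n-1} via
   j <-> j+1; all indices are taken modulo n. *)

Definition evec (n m : nat) : 'rV[rat]_n :=
  \row_(j < n) ((nat_of_ord j == m %% n)%N%:R).

(* E_n \ R, listed in increasing order: r_1 < ... < r_h; then r_{i+1} is the
   first element of E_n \ R in the cyclic sequence r_i+1, r_i+2, ...  *)
Definition compl_seq (n : nat) (R : {set 'I_n}) : seq nat :=
  [seq nat_of_ord x | x <- enum 'I_n & x \notin R].

Definition hh (n : nat) (R : {set 'I_n}) : nat := size (compl_seq R).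

(* r i for i = 0..h-1 (0-based: r 0 = r_1, ..., r (h-1) = r_h) *)
Definition rr (n : nat) (R : {set 'I_n}) (i : nat) : nat :=
  nth 0%N (compl_seq R) i.

(* r_{i-1}, cyclically (r_0 = r_h) *)
Definition rprev (n : nat) (R : {set 'I_n}) (i : nat) : nat :=
  rr R ((i + hh R).-1 %% hh R).

(* g_i : smallest positive integer with r_{i-1} + g_i = r_i (mod n) *)
Definition gg (n : nat) (R : {set 'I_n}) (i : nat) : nat :=
  let d := ((rr R i + n - rprev R i) %% n)%N in
  if d == 0%N then n else d.

Definition lam (n p : nat) (R : {set 'I_n}) (i k : nat) : 'rV[rat]_n :=
  if (k < gg R i)%N then
    evec n (rr R i) + ((p ^ k)%N)%:R *: evec n (rr R i + n - k)
  else
    evec n (rr R i) - ((p ^ gg R i)%N)%:R *: evec n (rprev R i).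

Definition lam_family (n p : nat) (R : {set 'I_n}) : seq 'rV[rat]_n :=
  flatten [seq [seq lam p R i k | k <- iota 1 (gg R i)] | i <- iota 0 (hh R)].

From HB Require Import structures.
From mathcomp Require Import all_boot all_order all_algebra.
From mathcomp Require Import zify.
Set Warnings "-notation-overridden,-ambiguous-paths".
Import Order.TTheory GRing.Theory Num.Theory.
Set Implicit Arguments. Unset Strict Implicit. Unset Printing Implicit Defensive.

(* The vectors lambda^(i)_(g_i) = e_(r_i) - p^(g_i) e_(r_(i-1)) link consecutive
   elements of E_n \ R around the cycle.  Chaining them once around the cycle,
   whose gaps g_i add up to n, puts (1 - p^n) e_(r_h) in the span, hence every
   e_(r_i); then lambda^(i)_k - e_(r_i) = p^k e_(r_i - k) yields the basis
   vectors of the gap ending at r_i. *)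

Section ComplementSeq.
Variables (n : nat) (R : {set 'I_n}).
Local Notation h := (hh R).
Local Notation r := (rr R).

Lemma compl_seq_sorted : sorted ltn (compl_seq R).
Proof.
rewrite /compl_seq sorted_map; apply: sorted_filter; first exact: ltn_trans.
by rewrite -sorted_map val_enum_ord iota_ltn_sorted.
Qed.

Lemma mem_compl_seq (j : 'I_n) : (val j \in compl_seq R) = (j \notin R).
Proof.
rewrite /compl_seq mem_map; last exact: val_inj.
by rewrite mem_filter mem_enum andbT.
Qed.

Lemma hh_gt0 : R != setT -> (0 < h)%N.
Proof.
move=> R_proper; have /subsetPn [j _ jNR] : ~~ ([set: 'I_n] \subset R).
  by rewrite subTset.
by rewrite /hh -has_predT; apply/hasP; exists (val j); rewrite ?mem_compl_seq.
Qed.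

Lemma rr_ltn i : (i < h)%N -> (r i < n)%N.
Proof. by rewrite /rr => /(mem_nth 0%N) /mapP [x _ ->]. Qed.

Lemma ltn_rr i j : (i < j)%N -> (j < h)%N -> (r i < r j)%N.
Proof.
move=> lt_ij lt_jh; apply: (sorted_ltn_nth ltn_trans) => //.
- exact: compl_seq_sorted.
- by rewrite inE (ltn_trans lt_ij).
Qed.

Lemma leq_rr i j : (i <= j)%N -> (j < h)%N -> (r i <= r j)%N.
Proof.
by rewrite leq_eqVlt => /orP [/eqP -> // | lt_ij /(ltn_rr lt_ij) /ltnW].
Qed.

Lemma rr_last_ltn : (0 < h)%N -> (r h.-1 < n)%N.
Proof. by move=> h_gt0; rewrite rr_ltn // ltn_predL. Qed.

Lemma rprev0 : (0 < h)%N -> rprev R 0 = r h.-1.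
Proof. by move=> h_gt0; rewrite /rprev add0n modn_small // prednK. Qed.

Lemma rprevS i : (i.+1 < h)%N -> rprev R i.+1 = r i.
Proof. by move=> lt_ih; rewrite /rprev addSn /= modnDr modn_small //; apply: ltnW. Qed.

Lemma gg_gt0 i : (0 < n)%N -> (0 < gg R i)%N.
Proof. by move=> n_gt0; rewrite /gg /=; case: eqP => [// | /eqP]; rewrite lt0n. Qed.

Lemma ggE i d : (0 < d <= n)%N ->
  (r i + n - rprev R i = d %[mod n])%N -> gg R i = d.
Proof.
move=> /andP [d_gt0 d_le_n] eq_d; rewrite /gg /= eq_d.
have [d_lt_n | d_eq_n] : (d < n)%N \/ d = n by lia.
  by rewrite modn_small // gtn_eqF.
by rewrite d_eq_n modnn.
Qed.

Lemma gg0 : (0 < h)%N -> gg R 0 = (r 0 + n - r h.-1)%N.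
Proof.
move=> h_gt0; have lt_last_n := rr_last_ltn h_gt0.
have le_0_last : (r 0 <= r h.-1)%N by rewrite leq_rr // ltn_predL.
by apply: ggE; rewrite ?rprev0 //; lia.
Qed.

Lemma ggS i : (i.+1 < h)%N -> gg R i.+1 = (r i.+1 - r i)%N.
Proof.
move=> lt_ih; have lt_i_i1 := ltn_rr (ltnSn i) lt_ih; have lt_i1_n := rr_ltn lt_ih.
apply: ggE; first lia.
by rewrite rprevS // -addnBAC ?(ltnW lt_i_i1) // modnDr.
Qed.

Lemma sum_gg_prefix m : (m < h)%N ->
  (\sum_(0 <= i < m.+1) gg R i = r m + n - r h.-1)%N.
Proof.
move=> lt_mh; have h_gt0 : (0 < h)%N by apply: leq_ltn_trans lt_mh.
have lt_last_n := rr_last_ltn h_gt0.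
elim: m lt_mh => [|m IHm] lt_mh; first by rewrite big_nat1 gg0 //; lia.
rewrite big_nat_recr //= (IHm (ltnW lt_mh)) ggS //.
have le_m1_last : (r m.+1 <= r h.-1)%N by rewrite leq_rr ?ltn_predL //; lia.
have := ltn_rr (ltnSn m) lt_mh; lia.
Qed.

Lemma sum_gg : (0 < h)%N -> (\sum_(0 <= i < h) gg R i = n)%N.
Proof. by move=> h_gt0; rewrite -{1}(prednK h_gt0) sum_gg_prefix ?prednK //; lia. Qed.

Lemma compl_seq_cover (j : 'I_n) : (0 < h)%N ->
  exists2 i, (i < h)%N & exists2 k, (k < gg R i)%N & ((r i + n - k) %% n)%N = j.
Proof.
move=> h_gt0; have lt_jn := ltn_ord j; have lt_last_n := rr_last_ltn h_gt0.
pose above x := (nat_of_ord j <= x)%N.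
have below_find k : (k < find above (compl_seq R))%N -> (r k < j)%N.
  by move=> /(before_find 0%N); rewrite /above ltnNge => ->.
have [lt_find_h | ge_find_h] := ltnP (find above (compl_seq R)) h; last first.
  have lt_last_j : (r h.-1 < j)%N by apply: below_find; lia.
  exists 0%N => //; exists (r 0 + n - j)%N; first by rewrite gg0 //; lia.
  by rewrite subKn ?modn_small //; lia.
have le_j_find : (j <= r (find above (compl_seq R)))%N.
  by apply: (nth_find 0%N); rewrite has_find.
move: (find above (compl_seq R)) lt_find_h below_find le_j_find.
move=> i lt_ih below_i le_j_i; exists i => //; exists (r i - j)%N; last first.
  by rewrite -addnBAC ?leq_subr // subKn // modnDr modn_small.
case: i lt_ih below_i le_j_i => [|i] lt_ih below_i le_j_i; first by rewrite gg0 //; lia.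
by rewrite ggS //; have := below_i i (ltnSn i); lia.
Qed.

End ComplementSeq.

Lemma size_lam_family n p (R : {set 'I_n}) : R != setT -> size (lam_family p R) = n.
Proof.
move=> R_proper; rewrite /lam_family size_flatten /shape -map_comp sumnE big_map.
under eq_bigr do rewrite /= size_map size_iota.
by have := sum_gg (hh_gt0 R_proper); rewrite /index_iota subn0.
Qed.

Local Open Scope ring_scope.

Lemma evec_modn n m : evec n (m %% n)%N = evec n m.
Proof. by rewrite /evec modn_mod. Qed.

Lemma evec_delta n (j : 'I_n) : evec n j = delta_mx 0 j.
Proof.
by apply/rowP => k; rewrite !mxE modn_small // eqxx; case: eqVneq => [->|/negbTE ->].
Qed.

Section LambdaSpan.
Variables (n p : nat) (R : {set 'I_n}).
Hypotheses (n_gt0 : (0 < n)%N) (p_gt1 : (1 < p)%N) (R_proper : R != setT).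
Local Notation h := (hh R).
Local Notation r := (rr R).
Local Notation V := <<lam_family p R>>%VS.

Let h_gt0 : (0 < h)%N := hh_gt0 R_proper.

Lemma lam_in_span i k : (i < h)%N -> (0 < k <= gg R i)%N -> lam p R i k \in V.
Proof.
move=> lt_ih k_range; apply/memv_span/flattenP.
exists [seq lam p R i k | k <- iota 1 (gg R i)]; first by apply: map_f; rewrite mem_iota.
by apply: map_f; rewrite mem_iota; lia.
Qed.

Lemma lam_last_in_span i : (i < h)%N ->
  evec n (r i) - (p ^ gg R i)%:R *: evec n (rprev R i) \in V.
Proof.
move=> lt_ih; have := lam_in_span lt_ih (k := gg R i).
by rewrite /lam ltnn gg_gt0 // leqnn; apply.
Qed.

Lemma evec_chain_in_span i : (i < h)%N ->
  evec n (r i) - (p ^ \sum_(0 <= l < i.+1) gg R l)%:R *: evec n (r h.-1) \in V.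
Proof.
elim: i => [|i IHi] lt_ih.
  by rewrite big_nat1 -rprev0 //; apply: lam_last_in_span.
have := memvD (lam_last_in_span lt_ih) (memvZ (p ^ gg R i.+1)%:R (IHi (ltnW lt_ih))).
rewrite rprevS // scalerBr addrA subrK scalerA -natrM -expnD.
by rewrite (addnC (gg R i.+1)) -big_nat_recr.
Qed.

Lemma evec_rr_in_span i : (i < h)%N -> evec n (r i) \in V.
Proof.
move=> lt_ih; set last := r h.-1.
have last_in : evec n last \in V.
  have lt_last_h : (h.-1 < h)%N by rewrite ltn_predL.
  have := evec_chain_in_span lt_last_h; rewrite prednK // sum_gg //.
  rewrite -{1}[evec n last]scale1r -scalerBl rpredZeq subr_eq0 eq_sym pnatr_eq1.
  by rewrite gtn_eqF // (leq_ltn_trans n_gt0 (ltn_expl n p_gt1)).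
have := evec_chain_in_span lt_ih.
by rewrite rpredBr // rpredZ.
Qed.

Lemma evec_gap_in_span i k : (i < h)%N -> (k < gg R i)%N -> evec n (r i + n - k) \in V.
Proof.
move=> lt_ih lt_k_gap; have [-> | k_gt0] := posnP k.
  by rewrite subn0 -evec_modn modnDr evec_modn evec_rr_in_span.
have k_range : (0 < k <= gg R i)%N by rewrite k_gt0 (ltnW lt_k_gap).
have := lam_in_span lt_ih k_range; rewrite /lam lt_k_gap.
by rewrite rpredDl ?evec_rr_in_span // rpredZeq pnatr_eq0 expn_eq0 (gtn_eqF (ltnW p_gt1)).
Qed.

Lemma evec_in_span (j : 'I_n) : evec n j \in V.
Proof.
have [i lt_ih [k lt_k_gap <-]] := compl_seq_cover j h_gt0.
by rewrite evec_modn evec_gap_in_span.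
Qed.

End LambdaSpan.

Theorem mainTheorem6 (n p : nat) (R : {set 'I_n}) :
  (0 < n)%N -> prime p -> R != [set: 'I_n] ->
  size (lam_family p R) = n /\
  basis_of (fullv : {vspace 'rV[rat]_n}) (lam_family p R).
Proof.
move=> n_gt0 /prime_gt1 p_gt1 R_proper.
have size_n := size_lam_family p R_proper.
split=> //; rewrite basisEdim size_n dimvf /dim /= mul1n leqnn andbT.
apply/subvP => v _; rewrite [v]row_sum_delta.
apply: memv_suml => j _; apply: memvZ; rewrite -evec_delta.
exact: evec_in_span.
Qed.
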